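(* Let $N$ be a positive integer and let $X$ be a $\{0,1,\dots,N\}$-valued random variable. Let $C$ be a finite set and let $\rho$ be a probability measure on $\{0,1,\dots,N\}^C$. Assume that for every $c\in C$, the distribution of $X$ is stochastically dominated by the $c$-marginal of $\rho$. Let $H$ be a $C$-valued random variable (defined on the same probability space as $X$, with arbitrary joint law). Let $Y$ be the random element of $\{0,1,\dots,N\}^C$ defined by $Y(c)=X\,\mathbf{1}_{H=c}$. Then the distribution of $Y$ is stochastically dominated by $\rho$.
   Context: $\{0,1,\dots,N\}^C$ carries the product order. Stochastic domination of $\mu$ by $\nu$ means there exist $X\sim\mu$, $Y\sim\nu$ on a common probability space with $X\le Y$ almost surely. *)

From mathcomp Require Import all_boot all_order all_algebra.
Set Implicit Arguments. Unset Strict Implicit. Unset Printing Implicit Defensive.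
Import Order.TTheory GRing.Theory Num.Theory.
Local Open Scope ring_scope.

Section Defs.
Variable R : realFieldType.

Definition is_pmf (T : finType) (p : T -> R) : Prop :=
  (forall t, 0 <= p t) /\ \sum_(t : T) p t = 1.

Definition pushforward (T U : finType) (p : T -> R) (f : T -> U) : U -> R :=
  fun u => \sum_(t : T | f t == u) p t.

(* Stochastic domination of mu by nu w.r.t. the order le on a finite space:
   there is a coupling (joint law of (X,Y)) with marginals mu, nu
   supported on {(x,y) | le x y}, i.e. X <= Y almost surely. *)
Definition stoch_dom (T : finType) (le : rel T) (mu nu : T -> R) : Prop :=
  exists pi : T * T -> R,
    [/\ is_pmf pi,
        (forall x y, pi (x, y) != 0 -> le x y),
        pushforward pi fst = mu &
        pushforward pi snd = nu].
End Defs.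

Definition ord_le (N : nat) : rel 'I_N.+1 := fun a b => (a <= b)%N.

Definition prod_le (N : nat) (C : finType) : rel {ffun C -> 'I_N.+1} :=
  fun f g => [forall c, (f c <= g c)%N].

Definition Ymap (N : nat) (C : finType) (xh : 'I_N.+1 * C) : {ffun C -> 'I_N.+1} :=
  [ffun c => if c == xh.2 then xh.1 else ord0].

From mathcomp Require Import all_boot all_order all_algebra.
From mathcomp Require Import zify.
From Stdlib Require Import FunctionalExtensionality.
Set Implicit Arguments.
Unset Strict Implicit.
Unset Printing Implicit Defensive.
Import Order.TTheory GRing.Theory Num.Theory.
Local Open Scope ring_scope.

(* Couple (X, H) with rho greedily, level by level from the top: the mass of
   {X = L, H = h} is spread over what is left of rho on {F | L <= F h},
   proportionally to it.  Domination of every marginal keeps, at each stage,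
   the residual mass of {F | t <= F c} above the not yet allocated mass of
   {X >= t}; this is exactly what makes the proportional split of level L
   exhaust its demand without overdrawing the residual. *)

Section Allocation.
Variables (R : realFieldType) (I T : finType).

Lemma proportional_allocation (r : T -> R) (A : I -> pred T) (d : I -> R) :
  (forall F, 0 <= r F) -> (forall i, 0 <= d i) ->
  (forall i, d i != 0 -> \sum_j d j <= \sum_(F | A i F) r F) ->
  exists a : I -> T -> R,
    [/\ forall i F, 0 <= a i F, forall i, \sum_F a i F = d i,
        forall F, \sum_i a i F <= r F & forall i F, a i F != 0 -> A i F].
Proof.
move=> r_ge0 d_ge0 d_le.
pose a i F := d i * r F * (A i F)%:R / \sum_(G | A i G) r G.
have d_le_sum i : d i <= \sum_j d j.
  by rewrite (bigD1 i) //= lerDl sumr_ge0.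
exists a; split.
- by move=> i F; rewrite /a divr_ge0 ?sumr_ge0 // !mulr_ge0 ?ler0n.
- move=> i; have [di0|di] := eqVneq (d i) 0.
    by rewrite big1 // => F _; rewrite /a di0 !mul0r.
  have rA_gt0 : 0 < \sum_(G | A i G) r G.
    apply: (lt_le_trans _ (le_trans (d_le_sum i) (d_le i di))).
    by rewrite lt_def di d_ge0.
  have -> : \sum_F a i F = d i * (\sum_(G | A i G) r G) / \sum_(G | A i G) r G.
    rewrite [X in _ = _ * X / _]big_mkcond mulr_sumr mulr_suml.
    by apply: eq_bigr => F _; rewrite /a; case: (A i F); rewrite ?mulr1 ?mulr0.
  by rewrite mulfK ?gt_eqF.
- move=> F; have [D0|D0] := eqVneq (\sum_j d j) 0.
    rewrite big1 // => i _.
    by rewrite /a (psumr_eq0P (fun j _ => d_ge0 j) D0) // !mul0r.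
  have D_gt0 : 0 < \sum_j d j by rewrite lt_def D0 sumr_ge0.
  apply: (@le_trans _ _ (\sum_i r F * d i / \sum_j d j)).
    apply: ler_sum => i _; have [di0|di] := eqVneq (d i) 0.
      by rewrite /a di0 !(mulr0, mul0r).
    rewrite /a [d i * r F]mulrC -!mulrA !ler_wpM2l //.
    have rA_gt0 := lt_le_trans D_gt0 (d_le i di).
    apply: le_trans (_ : (\sum_(G | A i G) r G)^-1 <= _).
      by rewrite ler_piMl ?invr_ge0 ?sumr_ge0 // lern1 leq_b1.
    by rewrite lef_pV2 ?posrE ?d_le.
  by rewrite -mulr_suml -mulr_sumr mulfK ?gt_eqF.
- by move=> i F; rewrite /a; case: (A i F); rewrite ?mulr0 ?mul0r ?eqxx.
Qed.
End Allocation.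

Section Domination.
Variable R : realFieldType.

Lemma sum_pushforward (T U : finType) (p : T -> R) (f : T -> U) (P : pred U) :
  \sum_(u | P u) pushforward p f u = \sum_(t | P (f t)) p t.
Proof.
rewrite (partition_big f P) //=; apply: eq_bigr => u Pu.
by apply: eq_bigl => t; case: eqP => [->|]; rewrite ?andbT ?andbF.
Qed.

Lemma pushforward_fst (T U : finType) (p : T * U -> R) x :
  pushforward p fst x = \sum_y p (x, y).
Proof.
transitivity (\sum_(a | a == x) \sum_y p (a, y)); last by rewrite big_pred1_eq.
by rewrite pair_big_dep; apply: eq_big => -[a b] //=; rewrite andbT.
Qed.

Lemma pushforward_snd (T U : finType) (p : T * U -> R) y :
  pushforward p snd y = \sum_x p (x, y).
Proof.
transitivity (\sum_a \sum_(b | b == y) p (a, b)).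
  by rewrite pair_big_dep; apply: eq_big => -[a b].
by apply: eq_bigr => a _; rewrite big_pred1_eq.
Qed.

Lemma stoch_dom_upper_mass (T : finType) (le : rel T) (mu nu : T -> R) (U : pred T) :
  (forall x y, le x y -> U x -> U y) ->
  stoch_dom le mu nu -> \sum_(x | U x) mu x <= \sum_(y | U y) nu y.
Proof.
move=> U_up [pi [[pi_ge0 _] pi_le <- <-]].
rewrite !sum_pushforward big_mkcond [leRHS]big_mkcond /=.
apply: ler_sum => -[x y] _ /=.
have [->|/pi_le/U_up Uxy] := eqVneq (pi (x, y)) 0; first by case: ifP; case: ifP.
by case: (boolP (U x)) => [/Uxy ->|_] //; case: ifP.
Qed.

Lemma stoch_dom_kernel (S T : finType) (le : rel T) (f : S -> T)
    (mu : S -> R) (nu : T -> R) (k : S -> T -> R) :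
  \sum_y nu y = 1 -> (forall s y, 0 <= k s y) ->
  (forall s, \sum_y k s y = mu s) -> (forall y, \sum_s k s y = nu y) ->
  (forall s y, k s y != 0 -> le (f s) y) ->
  stoch_dom le (pushforward mu f) nu.
Proof.
move=> nu_sum k_ge0 k_mu k_nu k_le.
exists (fun q => \sum_(s | f s == q.1) k s q.2); split.
- split; first by move=> q; apply: sumr_ge0.
  rewrite -(pair_big xpredT xpredT (fun x y => \sum_(s | f s == x) k s y)) /=.
  rewrite exchange_big -nu_sum; apply: eq_bigr => y _.
  by rewrite -k_nu (partition_big f xpredT).
- move=> x y; apply: contraNT => not_le; apply/eqP; apply: big1 => s /eqP fs.
  by apply/eqP; apply: contraNT not_le => /k_le; rewrite fs.
- apply: functional_extensionality => x; rewrite pushforward_fst /pushforward /=.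
  by rewrite exchange_big; apply: eq_bigr => s _; rewrite k_mu.
- apply: functional_extensionality => y; rewrite pushforward_snd -k_nu /=.
  by rewrite (partition_big f xpredT).
Qed.
End Domination.

Section GreedyCoupling.
Variables (R : realFieldType) (N : nat) (C : finType).
Local Notation I := ('I_N.+1 * C)%type.
Variable joint : I -> R.
Hypothesis joint_ge0 : forall p, 0 <= joint p.
Local Notation T := {ffun C -> 'I_N.+1}.

Definition dominates_below (L : nat) (r : T -> R) :=
  [/\ forall F, 0 <= r F,
      \sum_F r F = \sum_(p : I | (p.1 < L)%N) joint p &
      forall (t : nat) c,
        \sum_(p : I | (t <= p.1 < L)%N) joint p <= \sum_(F : T | (t <= F c)%N) r F].

Definition coupling_below (L : nat) (r : T -> R) (k : I -> T -> R) :=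
  [/\ forall p F, 0 <= k p F,
      forall p, \sum_F k p F = if (p.1 < L)%N then joint p else 0,
      forall F, \sum_p k p F = r F &
      forall p F, k p F != 0 -> (p.1 <= F p.2)%N].

Lemma allocate_level (L : nat) (r : T -> R) : dominates_below L.+1 r ->
  exists a : I -> T -> R,
    [/\ forall p F, 0 <= a p F,
        forall p, \sum_F a p F = if p.1 == L :> nat then joint p else 0,
        forall p F, a p F != 0 -> (p.1 <= F p.2)%N &
        dominates_below L (fun F => r F - \sum_p a p F)].
Proof.
move=> [r_ge0 r_sum r_tail].
pose d (p : I) := if p.1 == L :> nat then joint p else 0.
have d_sum : \sum_p d p = \sum_(p : I | p.1 == L :> nat) joint p.
  by rewrite [RHS]big_mkcond.
have below_split (t : nat) : (t <= L)%N ->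
    \sum_(p : I | (t <= p.1 < L.+1)%N) joint p =
    \sum_(p : I | (t <= p.1 < L)%N) joint p + \sum_(p : I | p.1 == L :> nat) joint p.
  move=> tL; rewrite (bigID (fun p : I => p.1 < L)%N) /=.
  by congr (_ + _); apply: eq_bigl => p; lia.
have d_ge0 p : 0 <= d p by rewrite /d; case: ifP.
have d_le p : d p != 0 -> \sum_q d q <= \sum_(F : T | (p.1 <= F p.2)%N) r F.
  rewrite /d; case: ifP => [/eqP pL _|_]; last by rewrite eqxx.
  rewrite d_sum pL; apply: le_trans _ (r_tail L p.2).
  by rewrite below_split // lerDr sumr_ge0.
have [a [a_ge0 a_sum a_le a_supp]] := proportional_allocation r_ge0 d_ge0 d_le.
have a_total : \sum_F \sum_p a p F = \sum_(p : I | p.1 == L :> nat) joint p.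
  by rewrite exchange_big -d_sum; apply: eq_bigr => p _; rewrite a_sum.
exists a; split=> //.
split=> [F|| t c]; first by rewrite subr_ge0.
- rewrite sumrB a_total r_sum (below_split 0%N) //.
  by rewrite addrK; apply: eq_bigl => p.
- have [tL|Lt] := leqP t L; last first.
    rewrite big_pred0 => [|p]; last by lia.
    by apply: sumr_ge0 => F _; rewrite subr_ge0.
  rewrite sumrB lerBrDr; apply: le_trans _ (r_tail t c).
  rewrite below_split // lerD2l -a_total [leRHS](bigID (fun F : T => t <= F c)%N) /= lerDl.
  by apply: sumr_ge0 => F _; apply: sumr_ge0.
Qed.

Lemma greedy_coupling (L : nat) (r : T -> R) :
  dominates_below L r -> exists k, coupling_below L r k.
Proof.
elim: L r => [|L IH] r.
  move=> [r_ge0 r_sum _]; rewrite [RHS]big_pred0 // in r_sum.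
  have r0 := psumr_eq0P (fun F _ => r_ge0 F) r_sum.
  exists (fun _ _ => 0); split=> [||F|] //; last by rewrite eqxx.
    by move=> p; rewrite big1.
  by rewrite big1 // r0.
move=> /allocate_level [a [a_ge0 a_sum a_le /IH [k [k_ge0 k_sum k_r k_le]]]].
exists (fun p F => a p F + k p F); split.
- by move=> p F; rewrite addr_ge0.
- move=> p; rewrite big_split /= a_sum k_sum ltnS.
  by case: ltngtP; rewrite ?addr0 ?add0r.
- by move=> F; rewrite big_split /= k_r addrC subrK.
- move=> p F; have [->|/a_le le_pF _ //] := eqVneq (a p F) 0.
  by rewrite add0r => /k_le.
Qed.

Lemma dominates_below_marginals (rho : T -> R) :
  (forall F, 0 <= rho F) -> \sum_F rho F = \sum_p joint p ->
  (forall c, stoch_dom (@ord_le N) (pushforward joint fst)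
                       (pushforward rho (fun F => F c))) ->
  dominates_below N.+1 rho.
Proof.
move=> rho_ge0 rho_sum dom; split=> // [|t c].
  by rewrite rho_sum; apply: eq_bigl => p; rewrite ltn_ord.
have -> : \sum_(p : I | (t <= p.1 < N.+1)%N) joint p =
          \sum_(x : 'I_N.+1 | (t <= x)%N) pushforward joint fst x.
  by rewrite sum_pushforward; apply: eq_bigl => p; rewrite ltn_ord andbT.
rewrite -(sum_pushforward _ (fun F : T => F c) (fun y => t <= y)%N).
by apply: stoch_dom_upper_mass (dom c) => x y xy tx; apply: leq_trans tx xy.
Qed.
End GreedyCoupling.

Theorem lemma2p11 (R : realFieldType) (N : nat) (C : finType)
  (joint : 'I_N.+1 * C -> R) (rho : {ffun C -> 'I_N.+1} -> R) :
  (0 < N)%N ->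
  is_pmf joint ->
  is_pmf rho ->
  (forall c : C, stoch_dom (@ord_le N) (pushforward joint fst)
                   (pushforward rho (fun f => f c))) ->
  stoch_dom (@prod_le N C) (pushforward joint (@Ymap N C)) rho.
Proof.
move=> _ [joint_ge0 joint_sum] [rho_ge0 rho_sum] dom.
have rho_mass : \sum_F rho F = \sum_p joint p by rewrite rho_sum joint_sum.
have rho_dom := dominates_below_marginals rho_ge0 rho_mass dom.
have [k [k_ge0 k_sum k_rho k_le]] := greedy_coupling joint_ge0 rho_dom.
apply: stoch_dom_kernel k_ge0 _ k_rho _ => // [p|p F /k_le le_pF].
  by rewrite k_sum ltn_ord.
apply/forallP => c; rewrite ffunE.
by case: eqP => [->|_] //=.
Qed.
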